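(* Let $p\ge3$ be an integer, $\mu\in[0,1)$, $\xi_\mu(t)=\mu t^2+(1-\mu)t^p$, and suppose $y_\mu$ satisfies $\frac{\xi_\mu''(1)}{\xi_\mu'(1)}\le y_\mu\le\frac{\xi_\mu'(1)}{\xi_\mu''(0)}$. Then the equation $h_\mu(t)=0$ has at most two solutions $t\in(0,1)$.
   Context: $y_\mu$ is the unique $y\in(1,\infty)$ with $\frac{\xi_\mu(1)}{\xi_\mu'(1)}=\frac1{y-1}\big(\frac y{y-1}\log y-1\big)$; if $\xi_\mu''(0)=0$ the upper bound is $+\infty$. Let $m_\mu,c_\mu>0$ be the unique solution of $\xi_\mu(1)=\frac1m\big(\frac1m\log\frac{c+m}c-\frac1{c+m}\big)$, $\frac1{\xi_\mu'(1)}=c(c+m)$, let $\phi_\mu(t)=c_\mu+m_\mu(1-t)$, and $h_\mu=\phi_\mu^{-2}-\xi_\mu''$. *)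

From Stdlib Require Import Reals Lra.
Open Scope R_scope.

Definition xi (mu : R) (p : nat) (t : R) : R := mu * t ^ 2 + (1 - mu) * t ^ p.
Definition xi1 (mu : R) (p : nat) (t : R) : R :=
  2 * mu * t + INR p * (1 - mu) * t ^ (p - 1).
Definition xi2 (mu : R) (p : nat) (t : R) : R :=
  2 * mu + INR p * INR (p - 1) * (1 - mu) * t ^ (p - 2).

Definition phi (c m t : R) : R := c + m * (1 - t).
Definition h (mu : R) (p : nat) (c m t : R) : R := / (phi c m t) ^ 2 - xi2 mu p t.

(* Set Y := (c + m) / c. The first equation of the system says
   ln Y = m^2 + m / (c + m), so that G(Y) = c (c + m) = G(y_mu) for the
   decreasing function G(y) = 1/(y-1) (y/(y-1) ln y - 1) (yprofile below);
   hence Y = y_mu, and the upper bound on y_mu reads 2 mu phi(0)^2 <= 1.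
   Dividing h(t) = 0 by t^(p-2) shows that its zeros are level points of
   psi(t) := (phi(t)^-2 - 2 mu) / t^(p-2). Three zeros give, by Rolle, two
   critical points of psi, i.e. two roots x = phi(s) < phi(0) of the cubic
   2 (phi(0) - x) = (p - 2) (x - 2 mu x^3); factoring out the difference of the
   two root equations is incompatible with 2 mu phi(0)^2 <= 1. *)
From Stdlib Require Import Reals Lra Lia.
From Coquelicot Require Import Coquelicot.
Open Scope R_scope.

Lemma ln_gt_mobius (y : R) : 1 < y -> 2 * (y - 1) / (y + 1) < ln y.
Proof.
intros Hy.
destruct (MVT_cor2 (fun x => ln x - 2 * (x - 1) / (x + 1))
            (fun x => / x - 4 / (x + 1) ^ 2) 1 y Hy) as [z [Hz Hzy]].
{ intros x Hx. apply is_derive_Reals. auto_derive; [lra | field; lra]. }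
rewrite ln_1 in Hz.
assert (Hd : 0 < / z - 4 / (z + 1) ^ 2).
{ replace (/ z - 4 / (z + 1) ^ 2) with ((z - 1) ^ 2 / (z * (z + 1) ^ 2))
    by (field; lra).
  apply Rdiv_lt_0_compat; [nra | apply Rmult_lt_0_compat; nra]. }
assert (0 < (/ z - 4 / (z + 1) ^ 2) * (y - 1)) by nra.
replace (2 * (1 - 1) / (1 + 1)) with 0 in Hz by field.
lra.
Qed.

Definition yprofile (y : R) : R := / (y - 1) * (y / (y - 1) * ln y - 1).

Lemma yprofile_decreasing (u v : R) : 1 < u -> u < v -> yprofile v < yprofile u.
Proof.
intros Hu Huv.
destruct (MVT_cor2 yprofile (fun y => (2 * (y - 1) - (y + 1) * ln y) / (y - 1) ^ 3)
            u v Huv) as [z [Hz Hzi]].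
{ intros x Hx. apply is_derive_Reals. unfold yprofile.
  auto_derive; [repeat split; lra | field; lra]. }
assert ((2 * (z - 1) - (z + 1) * ln z) / (z - 1) ^ 3 < 0).
{ pose proof (ln_gt_mobius z ltac:(lra)) as Hln.
  apply Rdiv_neg_pos; [| apply pow_lt; lra].
  assert (2 * (z - 1) = 2 * (z - 1) / (z + 1) * (z + 1)) by (field; lra).
  nra. }
nra.
Qed.

Lemma yprofile_inj (u v : R) : 1 < u -> 1 < v -> yprofile u = yprofile v -> u = v.
Proof.
intros Hu Hv E.
destruct (Rtotal_order u v) as [Huv | [Huv | Huv]]; [| exact Huv |].
- pose proof (yprofile_decreasing u v Hu Huv). lra.
- pose proof (yprofile_decreasing v u Hv Huv). lra.
Qed.

Lemma yprofile_ratio (c m : R) : 0 < c -> 0 < m ->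
  1 = / m * (/ m * ln ((c + m) / c) - / (c + m)) ->
  yprofile ((c + m) / c) = c * (c + m).
Proof.
intros Hc Hm E.
assert (Hln : ln ((c + m) / c) = m ^ 2 + m / (c + m)).
{ apply (Rmult_eq_compat_l (m * m)) in E.
  replace (m * m * (/ m * (/ m * ln ((c + m) / c) - / (c + m))))
    with (ln ((c + m) / c) - m / (c + m)) in E by (field; lra).
  lra. }
unfold yprofile. rewrite Hln. field. lra.
Qed.

Lemma phi0_sq_bound (mu y X c m : R) : 0 <= mu -> 0 < X -> 0 < c ->
  y = (c + m) / c -> / X = c * (c + m) -> (mu <> 0 -> y <= X / (2 * mu)) ->
  2 * mu * (c + m) ^ 2 <= 1.
Proof.
intros Hmu HX Hc Hy HcX Hup.
destruct (Req_dec mu 0) as [Hmu0 | Hmu0]; [rewrite Hmu0; lra |].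
assert (E : 2 * mu * (c + m) ^ 2 = 2 * mu * y * / X)
  by (rewrite Hy, HcX; field; lra).
rewrite E.
apply Rle_trans with (2 * mu * (X / (2 * mu)) * / X).
- apply Rmult_le_compat_r; [left; apply Rinv_0_lt_compat; lra |].
  apply Rmult_le_compat_l; [lra | exact (Hup Hmu0)].
- right. field. lra.
Qed.

Lemma cubic_no_two_roots_below (Q a x0 x1 x2 : R) :
  0 < Q -> 0 < x2 -> x2 < x1 -> x1 < x0 -> a * x0 ^ 2 <= 1 ->
  2 * (x0 - x1) = Q * (x1 - a * x1 ^ 3) ->
  2 * (x0 - x2) = Q * (x2 - a * x2 ^ 3) -> False.
Proof.
intros HQ H2 H21 H10 Hx0 F1 F2.
assert (E : (x1 - x2) * (Q * a * (x1 ^ 2 + x1 * x2 + x2 ^ 2) - (Q + 2)) = 0).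
{ transitivity ((2 * (x0 - x1) - Q * (x1 - a * x1 ^ 3))
                - (2 * (x0 - x2) - Q * (x2 - a * x2 ^ 3))); [ring | lra]. }
apply Rmult_integral in E. destruct E as [E | E]; [lra |].
assert (S12 : 0 < x1 ^ 2 + x1 * x2 + x2 ^ 2) by nra.
assert (Qa : 0 < Q * a).
{ destruct (Rle_lt_dec (Q * a) 0) as [Hle | Hgt]; [| exact Hgt].
  assert (Q * a * (x1 ^ 2 + x1 * x2 + x2 ^ 2) <= 0) by nra. lra. }
(* The same factorization between x1 and x0 has a positive second factor,
   while the cubic is <= 0 at x0 because a x0^2 <= 1. *)
assert (Q * a * (x1 ^ 2 + x1 * x2 + x2 ^ 2) < Q * a * (x0 ^ 2 + x0 * x1 + x1 ^ 2))
  by (apply Rmult_lt_compat_l; nra).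
assert (0 < (x0 - x1) * (Q * a * (x0 ^ 2 + x0 * x1 + x1 ^ 2) - (Q + 2)))
  by (apply Rmult_lt_0_compat; lra).
assert (Q * x0 * (a * x0 ^ 2 - 1) <= 0) by (apply Rmult_le_0_l; nra).
assert ((x0 - x1) * (Q * a * (x0 ^ 2 + x0 * x1 + x1 ^ 2) - (Q + 2))
        = Q * x0 * (a * x0 ^ 2 - 1) - (2 * (x0 - x1) - Q * (x1 - a * x1 ^ 3)))
  by ring.
lra.
Qed.

Definition psi (mu c m : R) (r : nat) (t : R) : R :=
  (/ phi c m t ^ 2 - 2 * mu) / t ^ S r.

Definition dpsi (mu c m : R) (r : nat) (t : R) : R :=
  (2 * m * t - INR (S r) * (phi c m t - 2 * mu * phi c m t ^ 3))
  / (phi c m t ^ 3 * t ^ S (S r)).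

Lemma psi_derive (mu c m : R) (r : nat) (t : R) :
  0 < phi c m t -> 0 < t -> derivable_pt_lim (psi mu c m r) t (dpsi mu c m r t).
Proof.
intros Hphi Ht. apply is_derive_Reals. unfold psi, dpsi, phi in *.
assert (0 < t ^ r) by (apply pow_lt; lra).
auto_derive.
- repeat split; apply Rgt_not_eq; nra.
- change (match r with 0%nat => 1 | S _ => INR r + 1 end) with (INR (S r)).
  simpl. field. repeat split; nra.
Qed.

Lemma psi_equal_values_critical (mu c m : R) (r : nat) (u v : R) :
  0 < c -> 0 < m -> 0 < u -> u < v -> v <= 1 -> psi mu c m r u = psi mu c m r v ->
  exists s, u < s < v /\
    2 * m * s = INR (S r) * (phi c m s - 2 * mu * phi c m s ^ 3).
Proof.
intros Hc Hm Hu Huv Hv E.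
assert (Hphi : forall t, t <= 1 -> 0 < phi c m t) by (intros; unfold phi; nra).
destruct (MVT_cor2 (psi mu c m r) (dpsi mu c m r) u v Huv) as [s [Es Hs]].
{ intros x Hx. apply psi_derive; [apply Hphi |]; lra. }
exists s. split; [exact Hs |].
rewrite E, Rminus_diag in Es.
assert (Hd : dpsi mu c m r s = 0).
{ symmetry in Es. apply Rmult_integral in Es. lra. }
unfold dpsi in Hd.
assert (0 < phi c m s ^ 3 * s ^ S (S r))
  by (apply Rmult_lt_0_compat; apply pow_lt; [apply Hphi |]; lra).
apply Rmult_integral in Hd. destruct Hd as [Hd | Hd]; [lra |].
apply Rinv_neq_0_compat in Hd; [contradiction | lra].
Qed.

Lemma psi_no_three_level_points (mu c m K : R) (r : nat) (u v w : R) :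
  0 < c -> 0 < m -> 2 * mu * (c + m) ^ 2 <= 1 ->
  0 < u -> u < v -> v < w -> w <= 1 ->
  psi mu c m r u = K -> psi mu c m r v = K -> psi mu c m r w = K -> False.
Proof.
intros Hc Hm Hbound Hu Huv Hvw Hw Eu Ev Ew.
destruct (psi_equal_values_critical mu c m r u v) as [s1 [Hs1 C1]]; try lra.
destruct (psi_equal_values_critical mu c m r v w) as [s2 [Hs2 C2]]; try lra.
apply (cubic_no_two_roots_below (INR (S r)) (2 * mu) (c + m)
         (phi c m s1) (phi c m s2)); unfold phi in *; try nra.
apply lt_0_INR. lia.
Qed.

Lemma h_zero_psi (p : nat) (mu c m t : R) (r : nat) :
  (p - 2)%nat = S r -> 0 < t -> h mu p c m t = 0 ->
  psi mu c m r t = INR p * INR (p - 1) * (1 - mu).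
Proof.
intros Hr Ht Hh. unfold h, xi2 in Hh. rewrite Hr in Hh. unfold psi.
assert (0 < t ^ S r) by (apply pow_lt; lra).
replace (/ phi c m t ^ 2 - 2 * mu) with (INR p * INR (p - 1) * (1 - mu) * t ^ S r)
  by lra.
field. lra.
Qed.

Lemma at_most_two_of_no_increasing_triple (P : R -> Prop) :
  (forall u v w, u < v -> v < w -> P u -> P v -> P w -> False) ->
  forall t1 t2 t3, P t1 -> P t2 -> P t3 -> t1 = t2 \/ t1 = t3 \/ t2 = t3.
Proof.
intros Hno t1 t2 t3 P1 P2 P3.
destruct (Rtotal_order t1 t2) as [a | [a | a]]; [| left; exact a |];
destruct (Rtotal_order t1 t3) as [b | [b | b]]; try (right; left; exact b);
destruct (Rtotal_order t2 t3) as [d | [d | d]]; try (right; right; exact d);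
exfalso;
first [ exact (Hno _ _ _ a d P1 P2 P3) | exact (Hno _ _ _ b (Rgt_lt _ _ d) P1 P3 P2)
      | exact (Hno _ _ _ a b P2 P1 P3)  | exact (Hno _ _ _ d (Rgt_lt _ _ b) P2 P3 P1)
      | exact (Hno _ _ _ b a P3 P1 P2)  | exact (Hno _ _ _ d a P3 P2 P1) | lra ].
Qed.

Theorem lemma5p7 (p : nat) (mu y m c : R) :
  (3 <= p)%nat ->
  0 <= mu < 1 ->
  (* y = y_mu : the (unique) y in (1,oo) with xi(1)/xi'(1) = 1/(y-1) (y/(y-1) log y - 1) *)
  1 < y ->
  xi mu p 1 / xi1 mu p 1 = / (y - 1) * (y / (y - 1) * ln y - 1) ->
  (* m = m_mu, c = c_mu : the (unique) positive solution of the system *)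
  0 < m -> 0 < c ->
  xi mu p 1 = / m * (/ m * ln ((c + m) / c) - / (c + m)) ->
  / xi1 mu p 1 = c * (c + m) ->
  (* xi''(1)/xi'(1) <= y_mu <= xi'(1)/xi''(0)  (upper bound +oo if xi''(0) = 0) *)
  xi2 mu p 1 / xi1 mu p 1 <= y ->
  (xi2 mu p 0 <> 0 -> y <= xi1 mu p 1 / xi2 mu p 0) ->
  (* h_mu(t) = 0 has at most two solutions in (0,1) *)
  forall t1 t2 t3 : R,
    0 < t1 < 1 -> 0 < t2 < 1 -> 0 < t3 < 1 ->
    h mu p c m t1 = 0 -> h mu p c m t2 = 0 -> h mu p c m t3 = 0 ->
    t1 = t2 \/ t1 = t3 \/ t2 = t3.
Proof.
intros Hp Hmu Hy Hyprof Hm Hc Hxi Hxi1 _ Hup t1 t2 t3 T1 T2 T3 E1 E2 E3.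
assert (Hr : (p - 2)%nat = S (p - 3)) by lia.
assert (Hxi_1 : xi mu p 1 = 1) by (unfold xi; rewrite !pow1; ring).
assert (HX : 0 < xi1 mu p 1).
{ unfold xi1. rewrite pow1.
  assert (3 <= INR p) by (replace 3 with (INR 3) by (simpl; ring); apply le_INR; lia).
  nra. }
assert (Hxi2_0 : xi2 mu p 0 = 2 * mu) by (unfold xi2; rewrite Hr; simpl; ring).
assert (Hy_ratio : y = (c + m) / c).
{ apply yprofile_inj; [exact Hy | apply Rlt_div_r; lra |].
  rewrite yprofile_ratio; [| lra | lra | rewrite <- Hxi_1; exact Hxi].
  unfold yprofile. rewrite <- Hyprof, Hxi_1, <- Hxi1. unfold Rdiv. ring. }
assert (Hbound : 2 * mu * (c + m) ^ 2 <= 1).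
{ apply (phi0_sq_bound mu y (xi1 mu p 1)); try tauto.
  rewrite <- Hxi2_0. intro Hmu0. apply Hup. rewrite Hxi2_0. lra. }
apply (at_most_two_of_no_increasing_triple
         (fun t => 0 < t < 1 /\ h mu p c m t = 0)); try tauto.
intros u v w Huv Hvw [Hu Eu] [Hv Ev] [Hw Ew].
apply (psi_no_three_level_points mu c m (INR p * INR (p - 1) * (1 - mu)) (p - 3) u v w);
  try lra; apply (h_zero_psi p); tauto.
Qed.
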